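(* Let $T:\mathcal{M}_d\to\mathcal{M}_d$ be a doubly stochastic, primitive quantum channel. Then the function $k\mapsto\alpha_2((T^* )^kT^k-\text{id}_d)$, $k\in\mathbb{N}$, is monotone increasing (non-decreasing).
   Context: Doubly stochastic channel: completely positive, trace preserving, $T(\mathbb{1})=T^*(\mathbb{1})=\mathbb{1}$ ($T^*$ the Hilbert–Schmidt adjoint). Primitive: $T^k(\rho)\to\mathbb{1}_d/d$ for all states. For a Liouvillian $\mathcal{L}$ on $\mathcal{M}_d$ with $\mathcal{L}(\mathbb{1})=0$: $\alpha_2(\mathcal{L})=\inf_{X>0}\mathcal{E}^2_{\mathcal{L}}(X)/\text{Ent}_2(X)$ over positive definite $X$, with $\mathcal{E}^2_{\mathcal{L}}(X)=-\frac1d\text{tr}[\mathcal{L}(X)X]$ and $\text{Ent}_2(X)=\frac1{2d}\text{tr}[X^2(\log\frac{X^2}{\text{tr}(X^2)}+\log d)]$. *)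

From HB Require Import structures.
From mathcomp Require Import all_boot all_order all_algebra.
From mathcomp Require Import sesquilinear spectral.
From mathcomp Require Import complex.
From mathcomp Require Import classical_sets reals exp.
Set Implicit Arguments. Unset Strict Implicit. Unset Printing Implicit Defensive.
Import Order.TTheory GRing.Theory Num.Theory Num.Def.
Local Open Scope ring_scope.
Local Open Scope classical_set_scope.

Section QChannels.
Variable R : realType.
Local Notation C := (R[i]).

Definition adjmx m n (A : 'M[C]_(m, n)) : 'M[C]_(n, m) := (map_mx conjC A)^T.

Definition psdmx n (A : 'M[C]_n) : Prop :=
  adjmx A = A /\ forall v : 'rV[C]_n, 0 <= (v *m A *m adjmx v) 0 0.
Definition pdmx n (A : 'M[C]_n) : Prop :=
  adjmx A = A /\ forall v : 'rV[C]_n, v != 0 -> 0 < (v *m A *m adjmx v) 0 0.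

(* complete positivity: id_n (x) T maps PSD block matrices to PSD block matrices,
   for every n *)
Definition completely_positive d (T : 'M[C]_d -> 'M[C]_d) : Prop :=
  forall (n : nat) (B : 'I_n -> 'I_n -> 'M[C]_d),
    psdmx (\mxblock_(i < n, j < n) B i j) ->
    psdmx (\mxblock_(i < n, j < n) T (B i j)).

Definition trace_preserving d (T : 'M[C]_d -> 'M[C]_d) : Prop :=
  forall X, \tr (T X) = \tr X.

(* Hilbert-Schmidt adjoint: tr(A^* T(B)) = tr((T^* A)^* B);
   explicitly (T^* A)_{ij} = tr(T(E_ij)^* A). *)
Definition hs_adjoint d (T : 'M[C]_d -> 'M[C]_d) : 'M[C]_d -> 'M[C]_d :=
  fun A => \matrix_(i, j) \tr (adjmx (T (delta_mx i j)) *m A).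

Definition doubly_stochastic d (T : {linear 'M[C]_d -> 'M[C]_d}) : Prop :=
  [/\ completely_positive T, trace_preserving T,
      T 1%:M = 1%:M & hs_adjoint T 1%:M = 1%:M].

Definition density d (rho : 'M[C]_d) : Prop := psdmx rho /\ \tr rho = 1.

Definition mx_cvg d (u : nat -> 'M[C]_d) (L : 'M[C]_d) : Prop :=
  forall eps : C, 0 < eps -> exists N : nat, forall k, (N <= k)%N ->
    forall i j, `|u k i j - L i j| < eps.

Definition primitive d (T : 'M[C]_d -> 'M[C]_d) : Prop :=
  forall rho, density rho -> mx_cvg (fun k => iter k T rho) ((d%:R)^-1 *: 1%:M).

(* functional calculus for Hermitian matrices via the spectral decomposition
   A = P^-1 diag(sp) P (P unitary) *)
Definition mxfun n (f : R -> R) (A : 'M[C]_n) : 'M[C]_n :=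
  invmx (spectralmx A) *m
  diag_mx (map_mx (fun z : C => (f (complex.Re z))%:C%C) (spectral_diag A)) *m
  spectralmx A.
Definition mxlog n (A : 'M[C]_n) := mxfun (@ln R) A.

(* Dirichlet form and 2-entropy (real valued; both are real for Hermitian X) *)
Definition dirichlet2 d (L : 'M[C]_d -> 'M[C]_d) (X : 'M[C]_d) : R :=
  - (d%:R)^-1 * complex.Re (\tr (L X *m X)).

Definition ent2 d (X : 'M[C]_d) : R :=
  let X2 := X *m X in
  (2 * d%:R)^-1 * complex.Re (\tr (X2 *m
     (mxlog ((\tr X2)^-1 *: X2) + (ln (d%:R : R))%:C%C *: 1%:M))).

(* log-Sobolev constant alpha_2: infimum over positive definite X
   (with Ent_2(X) > 0, i.e. where the quotient is defined) *)
Definition alpha2 d (L : 'M[C]_d -> 'M[C]_d) : R :=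
  inf [set dirichlet2 L X / ent2 X | X in [set X : 'M[C]_d | pdmx X /\ 0 < ent2 X]].

End QChannels.

From HB Require Import structures.
From mathcomp Require Import all_boot all_order all_algebra.
From mathcomp Require Import sesquilinear spectral complex.
From mathcomp Require Import classical_sets reals exp.
Set Implicit Arguments. Unset Strict Implicit. Unset Printing Implicit Defensive.
Import Order.TTheory GRing.Theory Num.Theory Num.Def.
Local Open Scope ring_scope.
Local Open Scope classical_set_scope.

(** For a Hermitian [X], the Dirichlet form of [T^{*k} T^k - id] is
    [(|X|_2^2 - |T^k X|_2^2) / d] in the Hilbert-Schmidt norm, while [Ent_2 X]
    does not depend on [k].  A unital, completely positive map satisfies the
    Kadison-Schwarz inequality [T(Y^{*} Y) >= T(Y)^{*} T(Y)]; taking traces and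
    using trace preservation shows that [T] contracts the Hilbert-Schmidt
    norm.  Hence the Rayleigh quotients defining [alpha_2] grow with [k]
    pointwise, and so does their infimum. *)

Lemma le_inf_image (R : realType) (U : Type) (S : set U) (f g : U -> R) :
  (forall x, S x -> 0 <= f x) -> (forall x, S x -> f x <= g x) ->
  inf (f @` S) <= inf (g @` S).
Proof.
move=> f_ge0 le_fg.
have [->|/set0P[x Sx]] := eqVneq S set0; first by rewrite !image_set0.
apply: lb_le_inf; first by exists (g x), x.
move=> _ [y Sy <-]; apply: le_trans (le_fg y Sy); apply: ge_inf; last by exists y.
by exists 0 => _ [z Sz <-]; exact: f_ge0.
Qed.

Lemma complex_ReB (R : realType) (x y : R[i]) :
  complex.Re (x - y) = complex.Re x - complex.Re y.
Proof. by case: x => a b; case: y. Qed.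

Section Adjoint.
Variable R : realType.
Local Notation C := (R[i]).

Lemma adjmxE m n (A : 'M[C]_(m, n)) i j : adjmx A i j = (A j i)^*.
Proof. by rewrite !mxE. Qed.

Lemma adjmxK m n (A : 'M[C]_(m, n)) : adjmx (adjmx A) = A.
Proof. by apply/matrixP => i j; rewrite !mxE conjCK. Qed.

Lemma adjmxM m n p (A : 'M[C]_(m, n)) (B : 'M[C]_(n, p)) :
  adjmx (A *m B) = adjmx B *m adjmx A.
Proof. by rewrite /adjmx map_mxM trmx_mul. Qed.

Lemma adjmxZ m n a (A : 'M[C]_(m, n)) : adjmx (a *: A) = a^* *: adjmx A.
Proof. by apply/matrixP => i j; rewrite !mxE rmorphM. Qed.

Lemma adjmx_sum m n (I : finType) (F : I -> 'M[C]_(m, n)) :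
  adjmx (\sum_i F i) = \sum_i adjmx (F i).
Proof.
apply/matrixP => i j; rewrite !mxE !summxE rmorph_sum.
by apply: eq_bigr => k _; rewrite !mxE.
Qed.

Lemma adjmx1 n : adjmx (1%:M : 'M[C]_n) = 1%:M.
Proof.
by apply/matrixP => i j; rewrite !mxE eq_sym; case: eqP; rewrite ?conjC1 ?conjC0.
Qed.

Lemma adjmx_mxblock p (p_ : 'I_p -> nat) (F : forall i j, 'M[C]_(p_ i, p_ j)) :
  adjmx (\mxblock_(i, j) F i j) = \mxblock_(i, j) adjmx (F j i).
Proof. by apply/matrixP => i j; rewrite !mxE. Qed.

Lemma adjmx_mxrow p (p_ : 'I_p -> nat) m (F : forall i, 'M[C]_(m, p_ i)) :
  adjmx (\mxrow_i F i) = \mxcol_i adjmx (F i).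
Proof. by apply/matrixP => i j; rewrite !mxE. Qed.

Lemma psdmx_adjmx_mul m n (N : 'M[C]_(m, n)) : psdmx (adjmx N *m N).
Proof.
split; first by rewrite adjmxM adjmxK.
move=> v; have -> : v *m (adjmx N *m N) *m adjmx v =
    (v *m adjmx N) *m adjmx (v *m adjmx N) by rewrite adjmxM adjmxK !mulmxA.
by rewrite mxE; apply: sumr_ge0 => k _; rewrite adjmxE mul_conjC_ge0.
Qed.

Lemma mxtrace_ge0 n (A : 'M[C]_n) :
  (forall v : 'rV[C]_n, 0 <= (v *m A *m adjmx v) 0 0) -> 0 <= \tr A.
Proof.
move=> A_ge0; apply: sumr_ge0 => a _.
have quad_delta : ((delta_mx 0 a : 'rV[C]_n) *m A
                      *m adjmx (delta_mx 0 a : 'rV[C]_n)) 0 0 = A a a.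
  rewrite -rowE mxE (bigD1 a) //= big1 ?addr0.
    by rewrite !mxE !eqxx mulr1n conjC1 mulr1.
  by move=> k /negbTE nka; rewrite !mxE nka mulr0n conjC0 mulr0.
by rewrite -quad_delta.
Qed.

End Adjoint.

Definition hsnorm2 (R : realType) d (Y : 'M[R[i]]_d) : R :=
  complex.Re (\tr (adjmx Y *m Y)).

Section HSAdjoint.
Variables (R : realType) (d : nat) (T : {linear 'M[R[i]]_d -> 'M[R[i]]_d}).

Lemma mxtrace_hs_adjoint (A Z : 'M[R[i]]_d) :
  \tr (hs_adjoint T A *m Z) = \tr (adjmx (T (adjmx Z)) *m A).
Proof.
have -> : adjmx Z = \sum_i \sum_j (Z j i)^* *: delta_mx i j.
  rewrite {1}(matrix_sum_delta (adjmx Z)); apply: eq_bigr => i _.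
  by apply: eq_bigr => j _; rewrite adjmxE.
rewrite linear_sum adjmx_sum mulmx_suml raddf_sum /= {1}/mxtrace.
apply: eq_bigr => i _; rewrite linear_sum adjmx_sum mulmx_suml raddf_sum /= !mxE.
apply: eq_bigr => j _.
by rewrite linearZ adjmxZ conjCK -scalemxAl mxtraceZ !mxE mulrC.
Qed.

Lemma mxtrace_hs_adjoint_iter k (A Z : 'M[R[i]]_d) :
  \tr (iter k (hs_adjoint T) A *m Z) = \tr (adjmx (iter k T (adjmx Z)) *m A).
Proof.
elim: k A Z => [|k IHk] A Z /=; first by rewrite adjmxK mxtrace_mulC.
by rewrite mxtrace_hs_adjoint mxtrace_mulC IHk adjmxK -iterSr.
Qed.

Lemma dirichlet2_hs_iter k (X : 'M[R[i]]_d) : adjmx X = X ->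
  dirichlet2 (fun X => iter k (hs_adjoint T) (iter k T X) - X) X
  = (d%:R)^-1 * (hsnorm2 X - hsnorm2 (iter k T X)).
Proof.
move=> herX; rewrite /dirichlet2 mulmxBl raddfB /= complex_ReB.
by rewrite mxtrace_hs_adjoint_iter herX /hsnorm2 herX mulNr -mulrN opprB.
Qed.

End HSAdjoint.

Section KadisonSchwarz.
Variables (R : realType) (d : nat) (T : {linear 'M[R[i]]_d -> 'M[R[i]]_d}).
Hypothesis T_cp : completely_positive T.

Let gram (Y : 'M[R[i]]_d) (i j : 'I_2) :=
  let F (k : 'I_2) := if val k == 0%N then 1%:M else Y in adjmx (F i) *m F j.

Let psd_gram Y : psdmx (\mxblock_(i < 2, j < 2) gram Y i j).
Proof. by rewrite /gram -mul_mxcol_mxrow -adjmx_mxrow; exact: psdmx_adjmx_mul. Qed.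

Lemma cp_adjmx (Y : 'M[R[i]]_d) : adjmx (T Y) = T (adjmx Y).
Proof.
have [herTG _] := T_cp (psd_gram Y).
have := congr1 (fun M => @submxblock _ 2 2 (fun _ => d) (fun _ => d) M
                           (lift ord0 ord0) ord0) herTG.
by rewrite adjmx_mxblock /= !mxblockK /gram /= adjmx1 mul1mx mulmx1.
Qed.

Hypothesis T1 : T 1%:M = 1%:M.

Lemma kadison_schwarz (Y : 'M[R[i]]_d) (x : 'rV[R[i]]_d) :
  0 <= (x *m (T (adjmx Y *m Y) - adjmx (T Y) *m T Y) *m adjmx x) 0 0.
Proof.
have [_ TG_ge0] := T_cp (psd_gram Y).
pose u := - (x *m adjmx (T Y)).
pose w (i : 'I_2) := if val i == 0%N then u else x.
(* The form of [id (x) T] at [(-x T(Y)^{*}, x)] is the claimed quadratic form. *)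
have := TG_ge0 (\mxrow_i w i).
rewrite mul_mxrow_mxblock adjmx_mxrow mul_mxrow_mxcol.
rewrite !big_ord_recl !big_ord0 /= /w /gram /= !addr0.
rewrite adjmx1 !mul1mx !mulmx1 T1 -cp_adjmx mulmx1 /u addNr mul0mx add0r.
by rewrite mulNmx mulmxBr mulmxBl !mulmxA mulmxDl mulNmx addrC.
Qed.

Hypothesis T_tp : trace_preserving T.

Lemma hsnorm2_contract (Y : 'M[R[i]]_d) : hsnorm2 (T Y) <= hsnorm2 Y.
Proof.
have := mxtrace_ge0 (kadison_schwarz Y).
by rewrite raddfB /= T_tp subr_ge0 lecE => /andP[_].
Qed.

Lemma hsnorm2_iter_le k l (Y : 'M[R[i]]_d) : (k <= l)%N ->
  hsnorm2 (iter l T Y) <= hsnorm2 (iter k T Y).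
Proof.
move=> kl; rewrite -(subnK kl) iterD; elim: (l - k)%N => [|n IHn] //=.
exact: le_trans (hsnorm2_contract _) IHn.
Qed.

End KadisonSchwarz.

Theorem mainTheorem12 (R : realType) (d : nat) (hd : (0 < d)%N)
  (T : {linear 'M[R[i]]_d -> 'M[R[i]]_d}) :
  doubly_stochastic T -> primitive T ->
  forall k l : nat, (k <= l)%N ->
    alpha2 (fun X => iter k (hs_adjoint T) (iter k T X) - X)
    <= alpha2 (fun X => iter l (hs_adjoint T) (iter l T X) - X).
Proof.
move=> [T_cp T_tp T1 _] _ k l kl; apply: le_inf_image.
- move=> X [[herX _] ent_gt0]; rewrite dirichlet2_hs_iter //.
  rewrite divr_ge0 ?(ltW ent_gt0) // mulr_ge0 ?invr_ge0 ?ler0n // subr_ge0.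
  exact: (hsnorm2_iter_le T_cp T1 T_tp X (leq0n k)).
- move=> X [[herX _] ent_gt0]; rewrite !dirichlet2_hs_iter //.
  rewrite ler_wpM2r ?invr_ge0 ?(ltW ent_gt0) // ler_wpM2l ?invr_ge0 ?ler0n //.
  by rewrite lerD2l lerN2 (hsnorm2_iter_le T_cp T1 T_tp).
Qed.
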